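(* Let $M$ be the blow-up of $\mathbb{CP}_2$ at two distinct points. For every Kähler class $\Omega$ on $M$, one has $\mathcal B(\Omega)<\tfrac14$. In explicit form: let $\Omega$ be normalized so that the proper transform of the line through the two blown-up points has area $1$, and let the two exceptional curves have areas $\beta,\gamma>0$. Then $\mathcal B(\Omega)$ equals the rational function $8N(\beta,\gamma)/D(\beta,\gamma)$, where $N=\gamma^2(1+4\gamma+6\gamma^2+4\gamma^3)+\beta\gamma(-1+3\gamma+18\gamma^2+26\gamma^3+16\gamma^4)+2\beta^5(2+8\gamma+21\gamma^2+33\gamma^3+27\gamma^4+9\gamma^5)+\beta^2(1+3\gamma+27\gamma^2+79\gamma^3+89\gamma^4+42\gamma^5)+\beta^4(6+26\gamma+89\gamma^2+168\gamma^3+150\gamma^4+54\gamma^5)+\beta^3(4+18\gamma+79\gamma^2+173\gamma^3+168\gamma^4+66\gamma^5)$ and $D=48\beta^6(1+\gamma)^6+48\beta^5(1+\gamma)^3(3+12\gamma+14\gamma^2+6\gamma^3)+(1+2\gamma)^2(1+8\gamma+20\gamma^2+24\gamma^3+12\gamma^4)+4\beta^4(1+\gamma)^2(47+282\gamma+573\gamma^2+504\gamma^3+180\gamma^4)+4\beta(3+33\gamma+140\gamma^2+306\gamma^3+376\gamma^4+252\gamma^5+72\gamma^6)+8\beta^2(7+70\gamma+270\gamma^2+535\gamma^3+592\gamma^4+354\gamma^5+90\gamma^6)+8\beta^3(17+153\gamma+535\gamma^2+963\gamma^3+966\gamma^4+522\gamma^5+120\gamma^6)$. The statement is that $8N(\beta,\gamma)<\tfrac14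 D(\beta,\gamma)$ for all $\beta,\gamma>0$.
   Context: For a Kähler class $\Omega$ on a toric surface with maximal torus $T^2$, define $\mathcal B(\Omega)=\frac{1}{32\pi^2}\|\mathfrak F(\Omega)\|^2$. This is computed as follows. Let $x,y$ be the Hamiltonians of the torus action for a $T^2$-invariant Kähler metric in $\Omega$. Let $\mathfrak F_1=\int_M x(s-s_0)\,d\mu$ and $\mathfrak F_2=\int_M y(s-s_0)\,d\mu$, with $s_0$ the average scalar curvature. Let $A=\int(x-x_0)^2d\mu$, $B=\int(y-y_0)^2d\mu$, $C=\int(x-x_0)(y-y_0)d\mu$, with $x_0,y_0$ the averages. All of these depend only on $\Omega$. Then $$\mathcal B(\Omega)=\frac{1}{32\pi^2}\,\frac{B\mathfrak F_1^2-2C\mathfrak F_1\mathfrak F_2+A\mathfrak F_2^2}{AB-C^2}.$$ If $\Omega$ contains an extremal Kähler metric, this equals $\frac{1}{32\pi^2}\int(s-s_0)^2\,d\mu$. *)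

From Stdlib Require Import Reals Lra Psatz.
Open Scope R_scope.

(* Numerator N(beta,gamma) of the explicit formula for B(Omega) on the
   blow-up of CP^2 at two points (line normalized to area 1, exceptional
   curves of areas beta, gamma). *)
Definition Nbg (b g : R) : R :=
  g^2 * (1 + 4*g + 6*g^2 + 4*g^3)
  + b*g * (-1 + 3*g + 18*g^2 + 26*g^3 + 16*g^4)
  + 2*b^5 * (2 + 8*g + 21*g^2 + 33*g^3 + 27*g^4 + 9*g^5)
  + b^2 * (1 + 3*g + 27*g^2 + 79*g^3 + 89*g^4 + 42*g^5)
  + b^4 * (6 + 26*g + 89*g^2 + 168*g^3 + 150*g^4 + 54*g^5)
  + b^3 * (4 + 18*g + 79*g^2 + 173*g^3 + 168*g^4 + 66*g^5).

Definition Dbg (b g : R) : R :=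
  48*b^6*(1+g)^6
  + 48*b^5*(1+g)^3*(3 + 12*g + 14*g^2 + 6*g^3)
  + (1+2*g)^2*(1 + 8*g + 20*g^2 + 24*g^3 + 12*g^4)
  + 4*b^4*(1+g)^2*(47 + 282*g + 573*g^2 + 504*g^3 + 180*g^4)
  + 4*b*(3 + 33*g + 140*g^2 + 306*g^3 + 376*g^4 + 252*g^5 + 72*g^6)
  + 8*b^2*(7 + 70*g + 270*g^2 + 535*g^3 + 592*g^4 + 354*g^5 + 90*g^6)
  + 8*b^3*(17 + 153*g + 535*g^2 + 963*g^3 + 966*g^4 + 522*g^5 + 120*g^6).

Definition Bcal (b g : R) : R := 8 * Nbg b g / Dbg b g.

(* D - 32 N is symmetric in (beta, gamma) and, apart from the constant 1,
   splits into a polynomial in beta alone, the same polynomial in gamma, and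
   beta gamma times a polynomial with positive coefficients.  The only
   negative coefficients are those of beta^4 and gamma^4, and they are
   absorbed by x^3 (2 - x + 4 x^2), whose quadratic factor has negative
   discriminant. *)

From Stdlib Require Import Reals Lra Psatz.
Open Scope R_scope.

Ltac positive_poly :=
  repeat (apply Rplus_lt_0_compat || apply Rmult_lt_0_compat || apply pow_lt);
  lra.

Definition axis_poly (x : R) : R :=
  12*x + 24*x^2 + 4*x^3*(2 - x + 4*x^2) + 48*x^6.

Definition cross_poly (b g : R) : R :=
  (164 + 464*g + 648*g^2 + 672*g^3 + 496*g^4 + 288*g^5)
  + b * (464 + 1296*g + 1752*g^2 + 1888*g^3 + 1488*g^4 + 720*g^5)
  + b^2 * (648 + 1752*g + 2168*g^2 + 2352*g^3 + 2064*g^4 + 960*g^5)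
  + b^3 * (672 + 1888*g + 2352*g^2 + 2244*g^3 + 1728*g^4 + 720*g^5)
  + b^4 * (496 + 1488*g + 2064*g^2 + 1728*g^3 + 960*g^4 + 288*g^5)
  + b^5 * (288 + 720*g + 960*g^2 + 720*g^3 + 288*g^4 + 48*g^5).

Lemma Dbg_sub_32Nbg (b g : R) :
  Dbg b g - 32 * Nbg b g = 1 + axis_poly b + axis_poly g + b * g * cross_poly b g.
Proof. unfold Dbg, Nbg, axis_poly, cross_poly; ring. Qed.

Lemma axis_poly_pos (x : R) : 0 < x -> 0 < axis_poly x.
Proof.
  intros Hx; unfold axis_poly.
  assert (0 < 2 - x + 4*x^2) by nra.
  assert (0 < 4*x^3) by positive_poly.
  assert (0 < x^6) by (apply pow_lt; lra).
  nra.
Qed.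

Lemma cross_poly_pos (b g : R) : 0 < b -> 0 < g -> 0 < cross_poly b g.
Proof. intros; unfold cross_poly; positive_poly. Qed.

Lemma Dbg_pos (b g : R) : 0 < b -> 0 < g -> 0 < Dbg b g.
Proof. intros; unfold Dbg; positive_poly. Qed.

Lemma Nbg_lt_Dbg (b g : R) : 0 < b -> 0 < g -> 32 * Nbg b g < Dbg b g.
Proof.
  intros Hb Hg.
  assert (0 < b * g * cross_poly b g)
    by (apply Rmult_lt_0_compat; [nra | apply cross_poly_pos; lra]).
  pose proof (axis_poly_pos b Hb); pose proof (axis_poly_pos g Hg).
  pose proof (Dbg_sub_32Nbg b g); lra.
Qed.

Theorem lemmaA1 : forall beta gamma : R, 0 < beta -> 0 < gamma ->
  Bcal beta gamma < 1/4.
Proof.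
  intros b g Hb Hg.
  pose proof (Dbg_pos b g Hb Hg) as HD.
  pose proof (Nbg_lt_Dbg b g Hb Hg).
  apply (Rmult_lt_reg_r (4 * Dbg b g)); [lra |].
  replace (Bcal b g * (4 * Dbg b g)) with (32 * Nbg b g)
    by (unfold Bcal; field; lra).
  lra.
Qed.
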